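(* Let $n\ge1$ and let $f\in\mathcal{G}_1$ be $n$-ary, $f=2x_1\cdots x_n\left(\sum_{i=1}^n a_ix_i^2+\sum_{i=1}^n b_ix_i+c\right)$. (i) If $a_i=1$ for some $i$, then $4r_k\in C(f)$ for every $1\le k\le n+2$. (ii) If $b_i=1$ for some $i$, then $4r_k\in C(f)$ for every $1\le k\le n+1$.
   Context: All operations are on $\mathbb{Z}_8$. $\mathcal{G}_1$ is the set of all operations (of any arity $n\ge1$) of the form $2x_1\cdots x_n\left(\sum_{i=1}^n a_ix_i^2+\sum_{i=1}^n b_ix_i+c\right)$ with $a_i,b_i\in\{0,1\}$ and $c\in\{0,1,2,3\}$. For an operation $f$, $C(f)$ denotes the clone on $\mathbb{Z}_8$ generated by $f$ together with binary addition and all unary constant operations. $r_k=x_1x_2\cdots x_k$. *)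

From mathcomp Require Import all_boot all_algebra.
Set Implicit Arguments. Unset Strict Implicit. Unset Printing Implicit Defensive.
Import GRing.Theory.
Local Open Scope ring_scope.

Definition Z8 := 'Z_8.

Definition op (m : nat) := ('I_m -> Z8) -> Z8.

(* C(f): the clone on Z_8 generated by the n0-ary operation f, binary addition
   and all unary constant operations.  [clone_of f m g] means that the m-ary
   operation g belongs to C(f). *)
Inductive clone_of (n0 : nat) (f : op n0) : forall m, op m -> Prop :=
| cl_proj m (i : 'I_m) : clone_of f (fun x => x i)
| cl_gen : clone_of f f
| cl_add : clone_of f (fun x : 'I_2 -> Z8 => x ord0 + x (lift ord0 ord0))
| cl_const (c : Z8) : clone_of f (fun _ : 'I_1 -> Z8 => c)
| cl_comp m k (g : op m) (h : 'I_m -> op k) :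
    clone_of f g -> (forall j, clone_of f (h j)) ->
    clone_of f (fun x => g (fun j => h j x))
| cl_ext m (g g' : op m) : clone_of f g -> (forall x, g' x = g x) -> clone_of f g'.

Definition G1op (n : nat) (a b : 'I_n -> bool) (c : 'I_4) : op n :=
  fun x => 2 * (\prod_(i < n) x i) *
           (\sum_(i < n) (a i)%:R * x i ^+ 2 + \sum_(i < n) (b i)%:R * x i + (c : nat)%:R).

Definition four_r (k : nat) : op k := fun x => 4 * \prod_(i < k) x i.
Arguments four_r : clear implicits.

(** Substituting [t] for the variable [x_i] turns [f] into a cubic [g(t)] whose
    leading coefficient is [2 a_i] times the product of the other variables.
    The third finite difference of [g] at fresh variables [u, v, w] is an
    additive combination of members of the clone and equals [6] times that
    coefficient times [u v w], i.e. [12 r_(n+2) = 4 r_(n+2)] in [Z_8].  When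
    [a_i = 0] and [b_i = 1], the second finite difference yields [4 r_(n+1)] in
    the same way.  Identifying the surplus variables with the constant [1]
    gives the smaller arities. *)

From mathcomp Require Import all_boot all_algebra ring.
Import GRing.Theory.
Set Implicit Arguments. Unset Strict Implicit. Unset Printing Implicit Defensive.
Local Open Scope ring_scope.

Lemma natr8_Z8 : (8%:R : Z8) = 0. Proof. by apply/eqP. Qed.

Definition upd (m : nat) (y : 'I_m -> Z8) (i : 'I_m) (t : Z8) : 'I_m -> Z8 :=
  fun j => if j == i then t else y j.

Section FiniteDifferences.
Variables (U V : zmodType).

Definition diff2 (h : U -> V) (u w : U) : V := h (u + w) - h u - h w.

Definition diff3 (h : U -> V) (u v w : U) : V :=
  h (u + v + w) - h (u + v) - h (u + w) - h (v + w) + h u + h v + h w.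

End FiniteDifferences.

Section Polarization.
Variables (R : comPzRingType) (h : R -> R).

Lemma diff2_cubic (alpha beta gamma : R) :
  (forall t, h t = alpha * t ^+ 3 + beta * t ^+ 2 + gamma * t) ->
  forall u w, diff2 h u w = alpha * u * w * (u + w) *+ 3 + beta * u * w *+ 2.
Proof. by move=> eh u w; rewrite /diff2 !eh; ring. Qed.

Lemma diff3_cubic (alpha beta gamma : R) :
  (forall t, h t = alpha * t ^+ 3 + beta * t ^+ 2 + gamma * t) ->
  forall u v w, diff3 h u v w = alpha * u * v * w *+ 6.
Proof. by move=> eh u v w; rewrite /diff3 !eh; ring. Qed.

End Polarization.

Section CloneClosure.
Variables (n0 : nat) (f : op n0).

Lemma clone_add k (g1 g2 : op k) :
  clone_of f g1 -> clone_of f g2 -> clone_of f (fun x => g1 x + g2 x).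
Proof.
move=> cl1 cl2.
pose h : 'I_2 -> op k := fun j => if (j : nat) == 0%N then g1 else g2.
have clh : forall j, clone_of f (h j) by move=> j; rewrite /h; case: ifP.
exact: (cl_ext (cl_comp (cl_add f) clh)).
Qed.

Lemma clone_muln k (g : op k) m :
  clone_of f g -> clone_of f (fun x => g x *+ m.+1).
Proof.
move=> clg; elim: m => [|m IHm]; first exact: (cl_ext clg).
by apply: (cl_ext (clone_add IHm clg)) => x; rewrite mulrS addrC.
Qed.

Lemma clone_opp k (g : op k) : clone_of f g -> clone_of f (fun x => - g x).
Proof.
move=> clg; apply: (cl_ext (clone_muln 6 clg)) => x.
have g8 : g x *+ 8 = 0 by rewrite -mulr_natr natr8_Z8 mulr0.
by rewrite -[LHS]add0r -g8 mulrSr addrK.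
Qed.

Lemma clone_sub k (g1 g2 : op k) :
  clone_of f g1 -> clone_of f g2 -> clone_of f (fun x => g1 x - g2 x).
Proof. by move=> cl1 /clone_opp; apply: clone_add. Qed.

Lemma clone_cst k (c : Z8) : clone_of f (fun _ : 'I_k.+1 -> Z8 => c).
Proof.
have clh (j : 'I_1) : clone_of f (fun y : 'I_k.+1 -> Z8 => y ord0) by exact: cl_proj.
exact: (cl_ext (cl_comp (cl_const f c) clh)).
Qed.

Lemma clone_upd m k (g : op m) (i : 'I_m) (s : 'I_m -> 'I_k) (T : op k) :
  clone_of f g -> clone_of f T ->
  clone_of f (fun x => g (upd (x \o s) i (T x))).
Proof.
move=> clg clT.
have clh j : clone_of f (fun x => upd (x \o s) i (T x) j).
  by rewrite /upd; case: (j == i); [exact: clT | exact: cl_proj].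
exact: (cl_ext (cl_comp clg clh)).
Qed.

Lemma clone_diff2 m k (g : op m) (i : 'I_m) (s : 'I_m -> 'I_k) (pu pw : 'I_k) :
  clone_of f g ->
  clone_of f (fun x => diff2 (fun t => g (upd (x \o s) i t)) (x pu) (x pw)).
Proof.
move=> clg; rewrite /diff2 /=.
by repeat first [apply: clone_sub | apply: clone_add | apply: clone_upd
                | exact: clg | exact: cl_proj].
Qed.

Lemma clone_diff3 m k (g : op m) (i : 'I_m) (s : 'I_m -> 'I_k) (pu pv pw : 'I_k) :
  clone_of f g ->
  clone_of f (fun x => diff3 (fun t => g (upd (x \o s) i t)) (x pu) (x pv) (x pw)).
Proof.
move=> clg; rewrite /diff3 /=.
by repeat first [apply: clone_sub | apply: clone_add | apply: clone_upd
                | exact: clg | exact: cl_proj].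
Qed.

Lemma clone_four_r_le M k :
  (1 <= k <= M)%N -> clone_of f (four_r M) -> clone_of f (four_r k).
Proof.
case: k => [//|k] /= leqkM clM.
pose h : 'I_M -> op k.+1 := fun j x => if (j < k.+1)%N then x (inord j) else 1.
have clh j : clone_of f (h j).
  by rewrite /h; case: (j < k.+1)%N; [exact: cl_proj | exact: clone_cst].
apply: (cl_ext (cl_comp clM clh)) => x; rewrite /four_r /h -big_mkcond /=.
congr (_ * _); rewrite -(big_ord_widen _ (fun j => x (inord j)) leqkM).
by apply: eq_bigr => j _; rewrite inord_val.
Qed.

End CloneClosure.

Section G1.
Variables (n : nat) (a b : 'I_n -> bool) (c : 'I_4).

Lemma G1op_upd (y : 'I_n -> Z8) (i : 'I_n) (t : Z8) :
  let P := \prod_(j < n | j != i) y j in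
  let S := \sum_(j < n | j != i) (a j)%:R * y j ^+ 2
         + \sum_(j < n | j != i) (b j)%:R * y j + (c : nat)%:R in
  G1op a b c (upd y i t)
  = 2 * (a i)%:R * P * t ^+ 3 + 2 * (b i)%:R * P * t ^+ 2 + 2 * P * S * t.
Proof.
move=> P S; rewrite /G1op (bigD1 i) //= (bigD1 i (P := xpredT)) //=.
rewrite (bigD1 i (P := xpredT)) //= /upd eqxx.
have off_i (F : 'I_n -> Z8 -> Z8) :
  \sum_(j < n | j != i) F j (if j == i then t else y j) = \sum_(j < n | j != i) F j (y j).
  by apply: eq_bigr => j /negbTE ->.
rewrite (off_i (fun j z => (a j)%:R * z ^+ 2)) (off_i (fun j z => (b j)%:R * z)).
have -> : \prod_(j < n | j != i) (if j == i then t else y j) = P.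
  by apply: eq_bigr => j /negbTE ->.
by rewrite /S; ring.
Qed.

Lemma clone_four_r_cubic (i : 'I_n) : a i -> clone_of (G1op a b c) (four_r n.+2).
Proof.
move=> ai.
pose s (j : 'I_n) : 'I_n.+2 := widen_ord (leqnSn n.+1) (widen_ord (leqnSn n) j).
pose pv : 'I_n.+2 := widen_ord (leqnSn n.+1) ord_max.
apply: (cl_ext (clone_diff3 i s (s i) pv ord_max (cl_gen _))) => x.
rewrite (diff3_cubic (G1op_upd (x \o s) i)) ai /four_r !big_ord_recr /= (bigD1 i) //=.
have -> : (4 : Z8) = 12 - 8 by apply/eqP.
by rewrite natr8_Z8 subr0; ring.
Qed.

Lemma clone_four_r_quadratic (i : 'I_n) :
  ~~ a i -> b i -> clone_of (G1op a b c) (four_r n.+1).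
Proof.
move=> /negbTE ai bi.
pose s (j : 'I_n) : 'I_n.+1 := widen_ord (leqnSn n) j.
apply: (cl_ext (clone_diff2 i s (s i) ord_max (cl_gen _))) => x.
rewrite (diff2_cubic (G1op_upd (x \o s) i)) ai bi /four_r big_ord_recr /= (bigD1 i) //=.
by ring.
Qed.

End G1.

Theorem lemma4p1 (n : nat) (a b : 'I_n -> bool) (c : 'I_4) :
  (1 <= n)%N ->
  ((exists i, a i) ->
     forall k, (1 <= k <= n + 2)%N -> clone_of (G1op a b c) (four_r k)) /\
  ((exists i, b i) ->
     forall k, (1 <= k <= n + 1)%N -> clone_of (G1op a b c) (four_r k)).
Proof.
move=> _.
have partA : (exists i, a i) ->
    forall k, (1 <= k <= n + 2)%N -> clone_of (G1op a b c) (four_r k).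
  case=> i ai k; rewrite addn2 => lek.
  exact: clone_four_r_le lek (clone_four_r_cubic b c ai).
split=> // -[i bi] k lek.
case: (boolP [exists j, a j]) => [/existsP some_a | /existsPn no_a].
  apply: (partA some_a); case/andP: lek => -> /leq_trans; apply.
  by rewrite leq_add2l.
rewrite addn1 in lek.
exact: clone_four_r_le lek (clone_four_r_quadratic c (no_a i) bi).
Qed.
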